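(* Let $A,B$ be RLE strings of encoded length $n$, let $\tilde d$ be a positive integer, and let $(i_A,i_B)\in[n]\times[n]$. Then $(i_A,i_B)$ is a $\tilde d$-witness pair if and only if there exists a common generalized substring $s$ of $A$ and $B$ with $|\tilde s|=\tilde d$ and $|s|<n^{1/3}$, having an occurrence in $\tilde A$ starting within the run $A[i_A]$ and an occurrence in $\tilde B$ starting within the run $B[i_B]$, such that the occurrence in the string whose run is shorter (in $\tilde A$ if $R(A[i_A])\le R(B[i_B])$, in $\tilde B$ if $R(B[i_B])\le R(A[i_A])$) starts at the first character of that run.
   Context: A string $\tilde s$ has run-length encoding (RLE) $s=s[1]\cdots s[m]$, the sequence of its maximal runs of identical characters; $|s|=m$ is the encoded length, $|\tilde s|$ the decoded length; $C(s[i])$ and $R(s[i])$ are the character and length of run $s[i]$. An RLE string $t$ is a generalized substring of $s$ if $\tilde t$ is a substring of $\tilde s$. A pair $(i_A,i_B)\in[n]\times[n]$ is a $\tilde d$-witness pair iff there is a common generalized substring $s$ of $A$ and $B$ with $|\tilde s|\ge\tilde d$ and $|s|<n^{1/3}$ such that an occurrence of $\tilde s$ in $\tilde A$ has its first character in the run $A[i_A]$ and an occurrence in $\tilde B$ has its first character in the run $B[i_B]$. *)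

From mathcomp Require Import all_boot.
Set Implicit Arguments. Unset Strict Implicit. Unset Printing Implicit Defensive.

(* An RLE string over an alphabet T: a sequence of runs (character, length). *)
Definition rle (T : eqType) := seq (T * nat).

Section RLE.
Variable T : eqType.

Definition C (r : T * nat) : T := r.1.
Definition R (r : T * nat) : nat := r.2.

(* A valid RLE: runs are nonempty and maximal (adjacent runs carry different
   characters). *)
Definition is_rle (s : rle T) : bool :=
  all (fun r => 0 < R r) s && sorted (fun r1 r2 => C r1 != C r2) s.

Definition decode (s : rle T) : seq T := flatten [seq nseq (R r) (C r) | r <- s].

(* R(s[i]) for the 0-based run index i (0 if out of range). *)
Definition run_len (s : rle T) (i : nat) : nat := nth 0 (map R s) i.

(* 0-based position in ~s of the first character of run s[i] (0-based i). *)
Definition run_start (s : rle T) (i : nat) : nat := sumn (map R (take i s)).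

Definition occurs_at (w x : seq T) (p : nat) : bool :=
  (p + size w <= size x) && (take (size w) (drop p x) == w).

Definition in_run (A : rle T) (i p : nat) : bool :=
  (run_start A i <= p) && (p < run_start A i + run_len A i).

(* (iA, iB) is a dt-witness pair (n = encoded length; |s| < n^(1/3) is
   written as |s|^3 < n, equivalent for natural |s|). *)
Definition witness_pair (A B : rle T) (n dt iA iB : nat) : Prop :=
  exists s : rle T,
    [/\ is_rle s, dt <= size (decode s), size s ^ 3 < n,
        exists pA, occurs_at (decode s) (decode A) pA && in_run A iA pA
      & exists pB, occurs_at (decode s) (decode B) pB && in_run B iB pB].

End RLE.

From mathcomp Require Import all_boot zify.
Set Implicit Arguments. Unset Strict Implicit. Unset Printing Implicit Defensive.

(* Write the common substring as s = (c, k) :: rest.  Where an occurrence of ~s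
   starts inside a run, its leading block c^k lies inside that run; if rest is
   nonempty, its next character differs from c, so the block ends exactly where
   the run ends, in ~A as well as in ~B.  Lengthening the block to the length of
   the shorter of the two runs then yields occurrences starting at the first
   character of the shorter run and still inside the longer one, without adding
   runs to s (if rest is empty, both occurrences simply move to the run starts).
   Cutting the result down to its first d~ characters keeps the occurrences and
   does not increase the number of runs. *)

Section RunLengthEncoding.
Variable T : eqType.
Implicit Types (s X : rle T) (w : seq T) (r : T * nat).

Lemma decode_cons r s : decode (r :: s) = nseq (R r) (C r) ++ decode s.
Proof. by []. Qed.

Lemma decode_cat s1 s2 : decode (s1 ++ s2) = decode s1 ++ decode s2.
Proof. by rewrite /decode map_cat flatten_cat. Qed.

Lemma size_decode s : size (decode s) = sumn (map (@R T) s).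
Proof. by elim: s => //= r s IHs; rewrite decode_cons size_cat size_nseq IHs. Qed.

Lemma run_startE X i : run_start X i = size (decode (take i X)).
Proof. by rewrite size_decode. Qed.

Lemma run_startS X i : run_start X i.+1 = run_start X i + run_len X i.
Proof.
elim: X i => [|r X IHX] [|i] //; rewrite /run_start /run_len /=.
  by rewrite take0 addn0.
by rewrite -addnA; congr (_ + _); apply: IHX.
Qed.

Lemma run_start_le_size X i : run_start X i <= size (decode X).
Proof. by rewrite run_startE -{2}(cat_take_drop i X) decode_cat size_cat leq_addr. Qed.

Lemma run_start_size X i : size X <= i -> run_start X i = size (decode X).
Proof. by move=> le_Xi; rewrite run_startE take_oversize. Qed.

Lemma decode_run_split r0 X i : i < size X ->
  decode X = decode (take i X) ++ nseq (run_len X i) (C (nth r0 X i)) ++ decode (drop i.+1 X).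
Proof.
move=> lt_iX; rewrite -{1}(cat_take_drop i X) decode_cat (drop_nth r0) //.
by rewrite decode_cons /run_len (nth_map r0).
Qed.

Lemma run_len_gt0 r0 X i : is_rle X -> i < size X -> 0 < run_len X i.
Proof.
case/andP=> /allP pos_X _ lt_iX; rewrite /run_len (nth_map r0) //.
exact/pos_X/mem_nth.
Qed.

Lemma nth_decode_in_run x0 r0 X i p : i < size X -> in_run X i p ->
  nth x0 (decode X) p = C (nth r0 X i).
Proof.
move=> lt_iX /andP[le_sp lt_pe].
rewrite (decode_run_split r0 lt_iX) nth_cat -run_startE ltnNge le_sp /=.
have lt_off : p - run_start X i < run_len X i by lia.
by rewrite nth_cat size_nseq lt_off nth_nseq lt_off.
Qed.

Lemma run_start_in_run r0 X i : is_rle X -> i < size X -> in_run X i (run_start X i).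
Proof. by move=> X_rle lt_iX; rewrite /in_run leqnn -addn1 leq_add2l (run_len_gt0 r0). Qed.

Lemma nth_decode_run_end x0 r0 X i : is_rle X -> i < size X ->
  run_start X i.+1 < size (decode X) ->
  nth x0 (decode X) (run_start X i.+1) != C (nth r0 X i).
Proof.
move=> X_rle lt_iX lt_end.
have lt_iSX : i.+1 < size X.
  by rewrite ltnNge; apply: contraTN lt_end => /run_start_size ->; rewrite ltnn.
rewrite (nth_decode_in_run x0 r0 lt_iSX (run_start_in_run r0 X_rle lt_iSX)) eq_sym.
by case/andP: X_rle => _ /(sortedP r0)/(_ i lt_iSX).
Qed.

Lemma in_runE X i p : in_run X i p = (run_start X i <= p < run_start X i.+1).
Proof. by rewrite /in_run run_startS. Qed.

Lemma occurs_atP x0 w (x : seq T) p :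
  reflect (p + size w <= size x /\ forall j, j < size w -> nth x0 x (p + j) = nth x0 w j)
          (occurs_at w x p).
Proof.
apply: (iffP andP) => [[le_px /eqP def_w] | [le_px eq_wx]].
  by split=> // j lt_jw; rewrite -[in RHS]def_w nth_take // nth_drop.
have le_w_drop : size w <= size (drop p x) by rewrite size_drop; lia.
split=> //; apply/eqP/(eq_from_nth (x0 := x0)) => [|j]; rewrite size_takel //.
by move=> lt_jw; rewrite nth_take // nth_drop eq_wx.
Qed.

Lemma occurs_at_nil (x : seq T) p : occurs_at [::] x p = (p <= size x).
Proof. by rewrite /occurs_at addn0 take0 eqxx andbT. Qed.

Lemma occurs_at_take d w (x : seq T) p : occurs_at w x p -> occurs_at (take d w) x p.
Proof.
case/andP=> le_px /eqP def_w; apply/andP; split; first by rewrite size_take_min; lia.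
by rewrite size_take_min take_min def_w.
Qed.

Lemma occurs_at_nseq_cat r0 X i q m w : i < size X ->
  run_start X i <= q -> q + m <= run_start X i.+1 -> occurs_at w (decode X) (q + m) ->
  occurs_at (nseq m (C (nth r0 X i)) ++ w) (decode X) q.
Proof.
set c := C (nth r0 X i) => lt_iX le_sq le_end /(occurs_atP c)[le_wX eq_wX].
apply/(occurs_atP c); rewrite size_cat size_nseq; split=> [|j lt_j]; first lia.
rewrite nth_cat size_nseq; case: ltnP => [lt_jm | le_mj].
  by rewrite nth_nseq lt_jm (nth_decode_in_run c r0 lt_iX) // in_runE; lia.
by rewrite -eq_wX; [congr nth; lia | lia].
Qed.

Lemma occurs_at_nseq_in_run r0 X i q m : i < size X ->
  run_start X i <= q -> q + m <= run_start X i.+1 ->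
  occurs_at (nseq m (C (nth r0 X i))) (decode X) q.
Proof.
move=> lt_iX le_sq le_end; rewrite -[nseq _ _]cats0.
apply: occurs_at_nseq_cat => //; rewrite occurs_at_nil.
exact: leq_trans le_end (run_start_le_size X i.+1).
Qed.

Section OccurrenceInRun.
Variables (X : rle T) (i p : nat) (c : T) (k : nat).
Hypotheses (lt_iX : i < size X) (p_in : in_run X i p) (k_gt0 : 0 < k).

Lemma occurs_head_char r0 w : occurs_at (nseq k c ++ w) (decode X) p -> c = C (nth r0 X i).
Proof.
case/(occurs_atP c) => _ /(_ 0); rewrite size_cat size_nseq addn0 nth_cat size_nseq k_gt0.
by rewrite nth_nseq k_gt0 (nth_decode_in_run c r0 lt_iX p_in) => <- //; lia.
Qed.

Lemma occurs_head_extend k' w : k <= k' <= p + k - run_start X i ->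
  occurs_at (nseq k c ++ w) (decode X) p ->
  occurs_at (nseq k' c ++ w) (decode X) (p + k - k').
Proof.
move=> /andP[le_kk' le_k'p] occ_p; move: p_in; rewrite in_runE => /andP[le_sp lt_pe].
rewrite (_ : nseq k' c ++ w = nseq (k' - k) c ++ nseq k c ++ w); last first.
  by rewrite catA -nseqD subnK.
rewrite {1}(occurs_head_char (c, 0) occ_p); apply: occurs_at_nseq_cat => //; try lia.
by rewrite (_ : _ + _ = p) //; lia.
Qed.

Hypothesis X_rle : is_rle X.

Lemma occurs_head_le_run_end w : occurs_at (nseq k c ++ w) (decode X) p ->
  p + k <= run_start X i.+1.
Proof.
move=> occ_p; have def_c := occurs_head_char (c, 0) occ_p.
move: occ_p p_in; rewrite in_runE => /(occurs_atP c)[le_wX eq_wX] /andP[le_sp lt_pe].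
rewrite size_cat size_nseq in le_wX eq_wX; rewrite leqNgt; apply/negP => lt_end.
have := nth_decode_run_end c (c, 0) X_rle lt_iX; rewrite -def_c.
rewrite (_ : run_start X i.+1 = p + (run_start X i.+1 - p)); last lia.
rewrite eq_wX ?nth_cat ?size_nseq; try lia.
by rewrite ifT ?nth_nseq ?ifT ?eqxx //; lia.
Qed.

Lemma occurs_head_run_end y w : y != c -> occurs_at (nseq k c ++ y :: w) (decode X) p ->
  p + k = run_start X i.+1.
Proof.
move=> neq_yc occ_p; apply/eqP; rewrite eqn_leq (occurs_head_le_run_end occ_p) leqNgt.
apply: contra neq_yc => lt_end; have def_c := occurs_head_char (c, 0) occ_p.
have pk_in : in_run X i (p + k) by move: p_in; rewrite !in_runE; lia.
case/(occurs_atP c): occ_p => _ /(_ k); rewrite size_cat size_nseq /= addnS ltnS leq_addr.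
rewrite nth_cat size_nseq ltnn subnn (nth_decode_in_run c (c, 0) lt_iX pk_in) -def_c.
by move=> /(_ isT) ->.
Qed.

Lemma occurs_rle_head_run_end r t : is_rle ((c, k) :: r :: t) ->
  occurs_at (decode ((c, k) :: r :: t)) (decode X) p -> p + k = run_start X i.+1.
Proof.
case/andP=> /and3P[_ r_gt0 _] /andP[neq_cr _].
rewrite decode_cons (decode_cons r) -(prednK r_gt0) /=.
by apply: occurs_head_run_end; rewrite eq_sym.
Qed.

End OccurrenceInRun.

Definition occurs_in_run w X i p := occurs_at w (decode X) p && in_run X i p.

Lemma occurs_in_run_take d w X i p : occurs_in_run w X i p -> occurs_in_run (take d w) X i p.
Proof. by rewrite /occurs_in_run => /andP[/(occurs_at_take d) -> ->]. Qed.

Lemma head_extension_shorter A B iA iB c k rest pA pB :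
  is_rle A -> is_rle B -> is_rle ((c, k) :: rest) -> iA < size A -> iB < size B ->
  run_len A iA <= run_len B iB ->
  occurs_in_run (decode ((c, k) :: rest)) A iA pA ->
  occurs_in_run (decode ((c, k) :: rest)) B iB pB ->
  exists2 k', k <= k' & exists pB',
    [/\ occurs_at (decode ((c, k') :: rest)) (decode A) (run_start A iA),
        occurs_in_run (decode ((c, k') :: rest)) B iB pB' &
        run_len B iB <= run_len A iA -> pB' = run_start B iB].
Proof.
move=> A_rle B_rle s_rle lt_iA lt_iB le_AB /andP[occA inA] /andP[occB inB].
have k_gt0 : 0 < k by case/andP: s_rle => /andP[].
have lenA_gt0 := run_len_gt0 (c, 0) A_rle lt_iA.
have [def_endA def_endB] := (run_startS A iA, run_startS B iB).
move: (inA) (inB); rewrite !in_runE => /andP[le_sA lt_pA] /andP[le_sB lt_pB].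
case: rest s_rle occA occB => [|r t] s_rle occA occB.
  rewrite decode_cons /= in occA occB.
  have le_endA := occurs_head_le_run_end lt_iA inA k_gt0 A_rle occA.
  have le_endB := occurs_head_le_run_end lt_iB inB k_gt0 B_rle occB.
  exists k => //; exists (run_start B iB); split=> //; rewrite decode_cons /= cats0.
  - rewrite (occurs_head_char lt_iA inA k_gt0 (c, 0) occA).
    by apply: occurs_at_nseq_in_run => //; lia.
  - rewrite /occurs_in_run (run_start_in_run _ B_rle) // andbT.
    rewrite (occurs_head_char lt_iB inB k_gt0 (c, 0) occB).
    by apply: occurs_at_nseq_in_run => //; lia.
have eq_endA := occurs_rle_head_run_end lt_iA inA k_gt0 A_rle s_rle occA.
have eq_endB := occurs_rle_head_run_end lt_iB inB k_gt0 B_rle s_rle occB.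
exists (run_len A iA); first lia.
exists (run_start B iB.+1 - run_len A iA); split; last lia.
  rewrite (_ : run_start A iA = pA + k - run_len A iA); last lia.
  by apply: (occurs_head_extend lt_iA inA k_gt0) => //=; lia.
rewrite /occurs_in_run in_runE (_ : run_start B iB.+1 - _ = pB + k - run_len A iA); last lia.
by rewrite (occurs_head_extend lt_iB inB k_gt0) //=; lia.
Qed.

Lemma head_extension A B iA iB c k rest pA pB :
  is_rle A -> is_rle B -> is_rle ((c, k) :: rest) -> iA < size A -> iB < size B ->
  occurs_in_run (decode ((c, k) :: rest)) A iA pA ->
  occurs_in_run (decode ((c, k) :: rest)) B iB pB ->
  exists2 k', k <= k' & exists pA' pB',
    [/\ occurs_in_run (decode ((c, k') :: rest)) A iA pA',
        occurs_in_run (decode ((c, k') :: rest)) B iB pB',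
        run_len A iA <= run_len B iB -> pA' = run_start A iA &
        run_len B iB <= run_len A iA -> pB' = run_start B iB].
Proof.
move=> A_rle B_rle s_rle lt_iA lt_iB occA occB.
case: (leqP (run_len A iA) (run_len B iB)) => [le_AB | /ltnW le_BA].
  have [k' le_kk' [pB' [occA' occB' eqB]]] :=
    head_extension_shorter A_rle B_rle s_rle lt_iA lt_iB le_AB occA occB.
  exists k' => //; exists (run_start A iA), pB'; split=> //.
  by rewrite /occurs_in_run occA' (run_start_in_run (c, 0)).
have [k' le_kk' [pA' [occB' occA' eqA]]] :=
  head_extension_shorter B_rle A_rle s_rle lt_iB lt_iA le_BA occB occA.
exists k' => //; exists pA', (run_start B iB); split=> //.
by rewrite /occurs_in_run occB' (run_start_in_run (c, 0)).
Qed.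

Lemma is_rle_head_len (c : T) k k' (rest : rle T) : 0 < k' ->
  is_rle ((c, k) :: rest) -> is_rle ((c, k') :: rest).
Proof. by rewrite /is_rle /= => -> /andP[/andP[_ ->]]; case: rest. Qed.

Fixpoint rle_take d s : rle T :=
  if s is r :: s' then
    if d is 0 then [::] else if d <= R r then [:: (C r, d)] else r :: rle_take (d - R r) s'
  else [::].

Lemma decode_rle_take d s : decode (rle_take d s) = take d (decode s).
Proof.
elim: s d => [|r s IHs] [|d] //=; first by rewrite take0.
rewrite decode_cons; case: ifP => [le_dr | /negbT lt_rd].
  by rewrite takel_cat ?size_nseq // take_nseq // decode_cons cats0.
by rewrite decode_cons IHs take_cat size_nseq ifN //; lia.
Qed.

Lemma size_rle_take d s : size (rle_take d s) <= size s.
Proof. by elim: s d => [|r s IHs] [|d] //=; case: ifP => //= _; rewrite ltnS. Qed.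

Lemma map_C_rle_take d s :
  map (@C T) (rle_take d s) = take (size (rle_take d s)) (map (@C T) s).
Proof.
elim: s d => [|r s IHs] [|d] //=; case: ifP => //= _; first by rewrite take0.
by congr (_ :: _); apply: IHs.
Qed.

Lemma is_rle_take d s : is_rle s -> is_rle (rle_take d s).
Proof.
case/andP=> pos_s sorted_s; apply/andP; split.
  elim: s d pos_s {sorted_s} => [|r s IHs] [|d] //= /andP[r_gt0 pos_s].
  by case: ifP => _ //=; rewrite r_gt0 IHs.
rewrite -(@sorted_map _ _ (@C T) (fun a b => a != b)) map_C_rle_take.
by apply: take_sorted; rewrite sorted_map.
Qed.

End RunLengthEncoding.

Theorem proposition1 (T : eqType) (A B : rle T) (n dt : nat) (iA iB : 'I_n) :
  is_rle A -> is_rle B -> size A = n -> size B = n -> 0 < dt ->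
  (witness_pair A B n dt iA iB <->
   exists s : rle T,
     [/\ is_rle s, size (decode s) = dt, size s ^ 3 < n &
       exists pA pB,
         [/\ occurs_at (decode s) (decode A) pA && in_run A iA pA,
             occurs_at (decode s) (decode B) pB && in_run B iB pB,
             run_len A iA <= run_len B iB -> pA = run_start A iA &
             run_len B iB <= run_len A iA -> pB = run_start B iB]]).
Proof.
move=> A_rle B_rle size_A size_B dt_gt0.
have lt_iA : iA < size A by rewrite size_A.
have lt_iB : iB < size B by rewrite size_B.
split=> [[s [s_rle le_dt s_small [pA occA] [pB occB]]] |
         [s [s_rle eq_dt s_small [pA [pB [occA occB _ _]]]]]]; last first.
  by exists s; split=> //; [rewrite eq_dt | exists pA | exists pB].
case: s s_rle le_dt s_small occA occB => [|[c k] rest]; first by move=> _ /=; lia.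
move=> s_rle le_dt s_small occA occB.
have [k' le_kk' [pA' [pB' [occA' occB' eqA eqB]]]] :=
  head_extension A_rle B_rle s_rle lt_iA lt_iB occA occB.
have k_gt0 : 0 < k by case/andP: s_rle => /andP[].
exists (rle_take dt ((c, k') :: rest)); split.
- by apply/is_rle_take/(is_rle_head_len _ s_rle); lia.
- rewrite decode_rle_take size_takel //; move: le_dt.
  by rewrite !decode_cons !size_cat !size_nseq /=; lia.
- by rewrite (leq_ltn_trans _ s_small) // leq_exp2r // size_rle_take.
- by exists pA', pB'; split=> //; rewrite decode_rle_take; apply: occurs_in_run_take.
Qed.
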